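(* Let $(X,d,f)$ be a dynamical system with $f$ uniformly continuous, and let $\mathcal{A}=\{\mathcal{U}_n\}_{n\in\mathbb{N}}$ be a complete tame defining sequence of $(X,d)$. Then $f$ has the shadowing property if and only if $(X,d,f)$ is uniformly conjugate to an inverse limit dynamical system whose associated inverse system consists of a sequence of 1-step shifts on countable alphabets, with uniformly continuous bonding maps, and satisfies the Mittag-Leffler Condition.
   Context: All spaces are nonempty separable metrizable. A dynamical system $(X,d,f)$: admissible metric $d$, continuous $f:X\to X$. A partition of $X$ is a cover by pairwise disjoint nonempty clopen sets. A defining sequence is a sequence $\{\mathcal{U}_n\}$ of partitions, each refining the previous, whose union is a basis of the topology; complete if every nested sequence $U_n\in\mathcal{U}_n$, $U_{n+1}\subseteq U_n$, has nonempty intersection; tame (w.r.t. $d$) if $\sup\{\operatorname{diam}O:O\in\mathcal{U}_n\}\to0$ and each $\mathcal{U}_n$ is $\rho_n$-separated for some $\rho_n>0$ (points in distinct elements are at distance $\ge\rho_n$). Shadowing property: for every $\varepsilon>0$ there is $\delta>0$ such that every infinite sequence $(x_n)$ with $d(f(x_n),x_{n+1})<\delta$ for all $n$ admits $x$ with $d(f^n(x),x_n)<\varepsilon$ for all $n$. A 1-step shift on a countable alphabet $A$ is a closed shift-invariant subset $Y\subseteq A^{\mathbb{N}}$ of the form $Y=\{y: y \text{ contains no word of } F\}$ for a set $F$ of words of length 2, with the shift map $\sigma$ and metric $d(y,z)=1/(i+1)$, $i$ least index with $y_i\ne z_i$. Given dynamical systems $(X_m,d_m,f_m)$ with metrics bounded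 by 1 and continuous bonding maps $g_m:X_{m+1}\to X_m$ with $f_m\circ g_m=g_m\circ f_{m+1}$, the inverse limit dynamical system is $\varprojlim(g_m,X_m)=\{(x_m)\in\prod X_m: x_m=g_m(x_{m+1})\}$ with metric $d_\Pi((x_m),(y_m))=\max_m d_m(x_m,y_m)/(m+1)$ and map the restriction of $\prod_m f_m$. The inverse system satisfies the Mittag-Leffler Condition if for every $N$ there is $k>N$ with $g_N\circ\cdots\circ g_k(X_{k+1})=g_N\circ\cdots\circ g_i(X_{i+1})$ for all $i\ge k$. Dynamical systems $(X,d_1,f)$, $(Y,d_2,g)$ are uniformly conjugate if there is a surjective homeomorphism $h:X\to Y$ with $h,h^{-1}$ uniformly continuous and $h\circ f=g\circ h$. *)

From Stdlib Require Import Reals.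
From Coquelicot Require Import Coquelicot.
Open Scope R_scope.

Definition is_metric {X : Type} (d : X -> X -> R) : Prop :=
  (forall x y, 0 <= d x y) /\ (forall x y, d x y = 0 <-> x = y) /\
  (forall x y, d x y = d y x) /\ (forall x y z, d x z <= d x y + d y z).

(* the topology is the one induced by d, so d is admissible by construction *)
Definition separable {X : Type} (d : X -> X -> R) : Prop :=
  exists D : nat -> X, forall x eps, 0 < eps -> exists n, d x (D n) < eps.

Definition d_open {X : Type} (d : X -> X -> R) (O : X -> Prop) : Prop :=
  forall x, O x -> exists r, 0 < r /\ forall y, d x y < r -> O y.
Definition d_closed {X : Type} (d : X -> X -> R) (C : X -> Prop) : Prop :=
  d_open d (fun x => ~ C x).
Definition d_clopen {X : Type} (d : X -> X -> R) (O : X -> Prop) : Prop :=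
  d_open d O /\ d_closed d O.

Definition unif_cont {X Y : Type} (dX : X -> X -> R) (dY : Y -> Y -> R)
  (h : X -> Y) : Prop :=
  forall eps, 0 < eps -> exists delta, 0 < delta /\
    forall x y, dX x y < delta -> dY (h x) (h y) < eps.

Definition is_partition {X : Type} (d : X -> X -> R) (P : (X -> Prop) -> Prop) : Prop :=
  (forall O, P O -> (exists x, O x) /\ d_clopen d O) /\
  (forall O O', P O -> P O' -> O <> O' -> forall x, ~ (O x /\ O' x)) /\
  (forall x, exists O, P O /\ O x).

Definition defining_sequence {X : Type} (d : X -> X -> R)
  (U : nat -> (X -> Prop) -> Prop) : Prop :=
  (forall n, is_partition d (U n)) /\
  (forall n O, U (S n) O -> exists O', U n O' /\ forall x, O x -> O' x) /\
  (forall W x, d_open d W -> W x ->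
     exists n O, U n O /\ O x /\ forall y, O y -> W y).

Definition complete_seq {X : Type} (U : nat -> (X -> Prop) -> Prop) : Prop :=
  forall V : nat -> X -> Prop,
    (forall n, U n (V n)) -> (forall n x, V (S n) x -> V n x) ->
    exists x, forall n, V n x.

Definition tame_seq {X : Type} (d : X -> X -> R) (U : nat -> (X -> Prop) -> Prop) : Prop :=
  (forall eps, 0 < eps -> exists N, forall n, (N <= n)%nat ->
     forall O, U n O -> forall x y, O x -> O y -> d x y < eps) /\
  (forall n, exists rho, 0 < rho /\ forall O O', U n O -> U n O' -> O <> O' ->
     forall x y, O x -> O' y -> rho <= d x y).

Definition shadowing {X : Type} (d : X -> X -> R) (f : X -> X) : Prop :=
  forall eps, 0 < eps -> exists delta, 0 < delta /\
    forall xs : nat -> X, (forall n, d (f (xs n)) (xs (S n)) < delta) ->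
      exists x, forall n, d (Nat.iter n f x) (xs n) < eps.

Definition countable (A : Type) : Prop :=
  exists c : A -> nat, forall a b, c a = c b -> a = b.

(* the 1-step shift defined by a set F of forbidden words of length 2 *)
Definition shift_space (A : Type) (F : A -> A -> Prop) : Type :=
  { y : nat -> A | forall i, ~ F (y i) (y (S i)) }.

(* d(y,z) = 1/(i+1), i least index with y_i <> z_i (0 if y = z);
   written as the maximum of {0} U {1/(i+1) | y_i <> z_i} *)
Definition seq_dist {A : Type} (y z : nat -> A) : R :=
  real (Lub_Rbar (fun r => r = 0 \/ exists i, y i <> z i /\ r = / INR (S i))).

Definition shift_dist {A : Type} {F : A -> A -> Prop} (y z : shift_space A F) : R :=
  seq_dist (proj1_sig y) (proj1_sig z).

Definition shift_map {A : Type} {F : A -> A -> Prop} (y : shift_space A F) : shift_space A F :=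
  exist (fun y => forall i, ~ F (y i) (y (S i)))
        (fun i => proj1_sig y (S i)) (fun i => proj2_sig y (S i)).

Definition inv_limit (Xs : nat -> Type) (g : forall m, Xs (S m) -> Xs m) : Type :=
  { x : forall m, Xs m | forall m, x m = g m (x (S m)) }.

Definition dPi {Xs : nat -> Type} (ds : forall m, Xs m -> Xs m -> R)
  {g : forall m, Xs (S m) -> Xs m} (x y : inv_limit Xs g) : R :=
  real (Lub_Rbar (fun r => r = 0 \/
     exists m, r = ds m (proj1_sig x m) (proj1_sig y m) / INR (S m))).

(* gcomp g N j = g_N o g_(N+1) o ... o g_(N+j-1) : X_(j+N) -> X_N *)
Fixpoint gcomp (Xs : nat -> Type) (g : forall m, Xs (S m) -> Xs m) (N j : nat)
  : Xs (j + N)%nat -> Xs N :=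
  match j return Xs (j + N)%nat -> Xs N with
  | O => fun x => x
  | S j' => fun x => gcomp Xs g N j' (g (j' + N)%nat x)
  end.

Definition gimage (Xs : nat -> Type) (g : forall m, Xs (S m) -> Xs m) (N j : nat)
  (y : Xs N) : Prop := exists x, y = gcomp Xs g N j x.

(* g_N o ... o g_i (X_(i+1)) is gimage N (i+1-N) *)
Definition mittag_leffler (Xs : nat -> Type) (g : forall m, Xs (S m) -> Xs m) : Prop :=
  forall N, exists k, (N < k)%nat /\ forall i, (k <= i)%nat ->
    forall y, gimage Xs g N (S k - N) y <-> gimage Xs g N (S i - N) y.

From Stdlib Require Import Reals Lra Lia.
From Stdlib Require Import Classical FunctionalExtensionality ProofIrrelevance.
From Stdlib Require Import IndefiniteDescription Eqdep_dec.
From Coquelicot Require Import Coquelicot.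
Open Scope R_scope.

(* A point is coded by its itineraries through the partitions [U m]: level [m] is
   the 1-step shift on the alphabet [U m] forbidding the words [a b] with [f a]
   disjoint from [b], and refinement induces the bonding maps. Completeness and
   tameness make this coding a uniform conjugacy with the inverse limit, so
   shadowing can be studied there. If [f] shadows, a deep enough symbolic orbit
   is a pseudo-orbit of small mesh and is realised by a true orbit, so all deep
   images at level [N] are the set of itineraries: this is Mittag-Leffler.
   Conversely, pseudo-orbits of a 1-step shift are traced exactly, and
   Mittag-Leffler lets the traced point be lifted to a thread. *)

Lemma real_Lub_Rbar_ub (E : R -> Prop) (b r : R) :
  E 0 -> (forall s, E s -> s <= b) -> E r -> r <= real (Lub_Rbar E).
Proof.
  intros H0 Hb Hr. destruct (Lub_Rbar_correct E) as [Hub Hlub].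
  assert (Hfin : Rbar_le (Lub_Rbar E) b) by (apply Hlub; intros s Hs; apply Hb, Hs).
  specialize (Hub r Hr).
  destruct (Lub_Rbar E); simpl in *; tauto.
Qed.

Lemma real_Lub_Rbar_le (E : R -> Prop) (b : R) :
  E 0 -> (forall s, E s -> s <= b) -> real (Lub_Rbar E) <= b.
Proof.
  intros H0 Hb. destruct (Lub_Rbar_correct E) as [Hub Hlub].
  assert (Hfin : Rbar_le (Lub_Rbar E) b) by (apply Hlub; intros s Hs; apply Hb, Hs).
  specialize (Hub 0 H0).
  destruct (Lub_Rbar E); simpl in *; tauto.
Qed.

Lemma inv_INR_S_pos (i : nat) : 0 < / INR (S i).
Proof. apply Rinv_0_lt_compat, lt_0_INR. lia. Qed.

Lemma inv_INR_S_antitone (i j : nat) : (i <= j)%nat -> / INR (S j) <= / INR (S i).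
Proof. intros H. apply Rinv_le_contravar; [apply lt_0_INR; lia | apply le_INR; lia]. Qed.

Lemma inv_INR_S_le_1 (i : nat) : / INR (S i) <= 1.
Proof. rewrite <- Rinv_1. apply (inv_INR_S_antitone 0). lia. Qed.

Lemma exists_inv_INR_S_lt (eps : R) : 0 < eps -> exists L, / INR (S L) < eps.
Proof.
  intros He. destruct (archimed_cor1 eps He) as [[|L] [HL HL0]]; [lia|]. now exists L.
Qed.

Definition agree {A : Type} (L : nat) (y z : nat -> A) : Prop :=
  forall i, (i <= L)%nat -> y i = z i.

Lemma agree_le {A : Type} (L L' : nat) (y z : nat -> A) :
  (L <= L')%nat -> agree L' y z -> agree L y z.
Proof. intros HL H i Hi. apply H. lia. Qed.

Section SeqDist.
Context {A : Type}.

Lemma seq_dist_le (y z : nat -> A) (b : R) :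
  0 <= b -> (forall i, y i <> z i -> / INR (S i) <= b) -> seq_dist y z <= b.
Proof.
  intros Hb H. apply real_Lub_Rbar_le; [now left|].
  intros r [->|[i [Hi ->]]]; auto.
Qed.

Lemma seq_dist_ge (y z : nat -> A) (i : nat) : y i <> z i -> / INR (S i) <= seq_dist y z.
Proof.
  intros H. apply (real_Lub_Rbar_ub _ 1); [now left | | right; eauto].
  intros r [->|[j [_ ->]]]; [lra | apply inv_INR_S_le_1].
Qed.

Lemma seq_dist_bounds (y z : nat -> A) : 0 <= seq_dist y z <= 1.
Proof.
  split.
  - apply (real_Lub_Rbar_ub _ 1); [now left | | now left].
    intros r [->|[j [_ ->]]]; [lra | apply inv_INR_S_le_1].
  - apply seq_dist_le; [lra|]. intros i _. apply inv_INR_S_le_1.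
Qed.

Lemma agree_of_seq_dist_lt (L : nat) (y z : nat -> A) :
  seq_dist y z < / INR (S L) -> agree L y z.
Proof.
  intros H i Hi. apply NNPP. intros Hne.
  pose proof (seq_dist_ge y z i Hne). pose proof (inv_INR_S_antitone i L Hi). lra.
Qed.
End SeqDist.

Lemma seq_dist_lt_of_agree (eps : R) : 0 < eps ->
  exists L, forall (A : Type) (y z : nat -> A), agree L y z -> seq_dist y z < eps.
Proof.
  intros He. destruct (exists_inv_INR_S_lt eps He) as [L HL]. exists L.
  intros A y z Hag. apply Rle_lt_trans with (/ INR (S L)); [|exact HL].
  apply seq_dist_le; [apply Rlt_le, inv_INR_S_pos|].
  intros i Hi. apply inv_INR_S_antitone.
  destruct (Nat.le_gt_cases i L) as [Hle|]; [now contradict Hi; apply Hag | lia].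
Qed.

Lemma shift_unif_cont_iff {A B : Type} {F : A -> A -> Prop} {G : B -> B -> Prop}
  (H : shift_space A F -> shift_space B G) :
  unif_cont shift_dist shift_dist H <->
  forall L, exists L', forall u v, agree L' (proj1_sig u) (proj1_sig v) ->
    agree L (proj1_sig (H u)) (proj1_sig (H v)).
Proof.
  split.
  - intros Huc L. destruct (Huc _ (inv_INR_S_pos L)) as [del [Hdel Hd]].
    destruct (seq_dist_lt_of_agree del Hdel) as [L' HL']. exists L'.
    intros u v Huv. apply agree_of_seq_dist_lt, Hd, HL', Huv.
  - intros Hag eps He. destruct (seq_dist_lt_of_agree eps He) as [L HL].
    destruct (Hag L) as [L' HL']. exists (/ INR (S L')). split; [apply inv_INR_S_pos|].
    intros u v Huv. apply HL, HL', agree_of_seq_dist_lt, Huv.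
Qed.

Lemma shift_ext {A : Type} {F : A -> A -> Prop} (u v : shift_space A F) :
  (forall i, proj1_sig u i = proj1_sig v i) -> u = v.
Proof.
  intros H. apply eq_sig_hprop; [intros; apply proof_irrelevance|].
  now apply functional_extensionality.
Qed.

Lemma shift_map_iter {A : Type} {F : A -> A -> Prop} (n : nat) (y : shift_space A F) (i : nat) :
  proj1_sig (Nat.iter n shift_map y) i = proj1_sig y (n + i)%nat.
Proof.
  revert i. induction n as [|n IH]; intros i; [reflexivity|].
  simpl. rewrite IH. f_equal. lia.
Qed.

(* The tracing point reads off the first symbol of each term. *)
Lemma one_step_shift_tracing {A : Type} {F : A -> A -> Prop}
  (w : nat -> shift_space A F) (L : nat) :
  (forall n, agree L (proj1_sig (shift_map (w n))) (proj1_sig (w (S n)))) ->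
  exists z : shift_space A F,
    forall n, agree L (proj1_sig (Nat.iter n shift_map z)) (proj1_sig (w n)).
Proof.
  intros Hw.
  assert (Hstep : forall i, ~ F (proj1_sig (w i) 0%nat) (proj1_sig (w (S i)) 0%nat)).
  { intros i. rewrite <- (Hw i 0%nat) by lia. apply (proj2_sig (w i)). }
  exists (exist _ (fun i => proj1_sig (w i) 0%nat) Hstep : shift_space A F).
  assert (Hread : forall i, (i <= L)%nat ->
    forall n, proj1_sig (w (n + i)%nat) 0%nat = proj1_sig (w n) i).
  { induction i as [|i IH]; intros Hi n; [now rewrite Nat.add_0_r|].
    replace (n + S i)%nat with (S n + i)%nat by lia.
    rewrite IH by lia. symmetry. apply (Hw n i). lia. }
  intros n i Hi. rewrite shift_map_iter. apply Hread, Hi.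
Qed.

Section InverseLimitMetric.
Context {Xs : nat -> Type} (ds : forall m, Xs m -> Xs m -> R) {g : forall m, Xs (S m) -> Xs m}.
Hypothesis ds_bounds : forall m x y, 0 <= ds m x y <= 1.

Lemma dPi_le (x y : inv_limit Xs g) (b : R) : 0 <= b ->
  (forall m, ds m (proj1_sig x m) (proj1_sig y m) / INR (S m) <= b) -> dPi ds x y <= b.
Proof. intros Hb H. apply real_Lub_Rbar_le; [now left|]. intros r [->|[m ->]]; auto. Qed.

Lemma dPi_ge (x y : inv_limit Xs g) (m : nat) :
  ds m (proj1_sig x m) (proj1_sig y m) / INR (S m) <= dPi ds x y.
Proof.
  apply (real_Lub_Rbar_ub _ 1); [now left | | right; eauto].
  intros r [->|[k ->]]; [lra|].
  destruct (ds_bounds k (proj1_sig x k) (proj1_sig y k)).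
  pose proof (inv_INR_S_pos k). pose proof (inv_INR_S_le_1 k).
  unfold Rdiv. rewrite <- (Rmult_1_r 1). apply Rmult_le_compat; lra.
Qed.

Lemma dPi_lt_of_levels (eps : R) : 0 < eps -> exists M, forall x y : inv_limit Xs g,
  (forall m, (m <= M)%nat -> ds m (proj1_sig x m) (proj1_sig y m) <= eps / 2) ->
  dPi ds x y < eps.
Proof.
  intros He. destruct (exists_inv_INR_S_lt (eps / 2)) as [M HM]; [lra|].
  exists M. intros x y H. apply Rle_lt_trans with (eps / 2); [|lra].
  apply dPi_le; [lra|]. intros m.
  destruct (ds_bounds m (proj1_sig x m) (proj1_sig y m)).
  pose proof (inv_INR_S_pos m). pose proof (inv_INR_S_le_1 m). unfold Rdiv at 1.
  destruct (Nat.le_gt_cases m M) as [Hm|Hm].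
  - specialize (H m Hm). rewrite <- (Rmult_1_r (eps / 2)). apply Rmult_le_compat; lra.
  - pose proof (inv_INR_S_antitone M m ltac:(lia)).
    apply Rle_trans with (1 * / INR (S M)); [apply Rmult_le_compat|]; lra.
Qed.

Lemma dPi_lt_level (x y : inv_limit Xs g) (m : nat) (th : R) :
  dPi ds x y < th -> ds m (proj1_sig x m) (proj1_sig y m) < th * INR (S m).
Proof.
  intros H. pose proof (dPi_ge x y m). pose proof (lt_0_INR (S m) ltac:(lia)).
  unfold Rdiv in *. apply (Rmult_lt_reg_r (/ INR (S m))); [apply inv_INR_S_pos|].
  rewrite Rmult_assoc, Rinv_r, Rmult_1_r by lra. lra.
Qed.
End InverseLimitMetric.

Lemma invlim_ext {Xs : nat -> Type} {g : forall m, Xs (S m) -> Xs m} (p q : inv_limit Xs g) :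
  (forall m, proj1_sig p m = proj1_sig q m) -> p = q.
Proof.
  intros H. apply eq_sig_hprop; [intros; apply proof_irrelevance|].
  now apply functional_extensionality_dep.
Qed.

Section ShiftInverseLimitMetric.
Context {A : nat -> Type} {F : forall m, A m -> A m -> Prop}
  {g : forall m, shift_space (A (S m)) (F (S m)) -> shift_space (A m) (F m)}.

Let dP := dPi (fun m => @shift_dist (A m) (F m)) (g := g).

Lemma dPi_shift_lt_of_agree (eps : R) : 0 < eps -> exists M L,
  forall p q : inv_limit (fun m => shift_space (A m) (F m)) g,
  (forall m, (m <= M)%nat ->
     agree L (proj1_sig (proj1_sig p m)) (proj1_sig (proj1_sig q m))) ->
  dP p q < eps.
Proof.
  intros He.
  destruct (dPi_lt_of_levels (fun m => @shift_dist (A m) (F m)) (g := g)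
    (fun m u v => seq_dist_bounds _ _) eps He) as [M HM].
  destruct (seq_dist_lt_of_agree (eps / 2)) as [L HL]; [lra|].
  exists M, L. intros p q H. apply HM. intros m Hm. left. apply HL, H, Hm.
Qed.

Lemma agree_of_dPi_shift_lt (m L : nat) : exists th, 0 < th /\
  forall p q : inv_limit (fun m => shift_space (A m) (F m)) g, dP p q < th ->
  agree L (proj1_sig (proj1_sig p m)) (proj1_sig (proj1_sig q m)).
Proof.
  pose proof (lt_0_INR (S m) ltac:(lia)) as Hm0.
  exists (/ INR (S L) / INR (S m)). split.
  { apply Rdiv_lt_0_compat; [apply inv_INR_S_pos | lra]. }
  intros p q H. apply agree_of_seq_dist_lt.
  pose proof (dPi_lt_level _ (fun m u v => seq_dist_bounds _ _) p q m _ H) as Hm.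
  unfold Rdiv in Hm. rewrite Rmult_assoc, Rinv_l, Rmult_1_r in Hm by lra. exact Hm.
Qed.
End ShiftInverseLimitMetric.

Lemma iter_conj {X Y : Type} (f : X -> X) (G : Y -> Y) (h : X -> Y) :
  (forall x, h (f x) = G (h x)) -> forall n x, h (Nat.iter n f x) = Nat.iter n G (h x).
Proof. intros Hh n x. induction n as [|n IH]; simpl; [reflexivity|]. now rewrite Hh, IH. Qed.

Lemma shadowing_conj {X Y : Type} (dX : X -> X -> R) (dY : Y -> Y -> R)
  (f : X -> X) (G : Y -> Y) (h : X -> Y) (k : Y -> X) :
  (forall x, k (h x) = x) -> (forall y, h (k y) = y) ->
  unif_cont dX dY h -> unif_cont dY dX k ->
  (forall x, h (f x) = G (h x)) -> shadowing dY G -> shadowing dX f.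
Proof.
  intros Hkh Hhk Hh Hk Hhf HG eps He.
  destruct (Hk eps He) as [eta [Heta Hk']].
  destruct (HG eta Heta) as [delY [HdelY Hsh]].
  destruct (Hh delY HdelY) as [del [Hdel Hh']].
  exists del. split; [exact Hdel|]. intros xs Hxs.
  destruct (Hsh (fun n => h (xs n))) as [y Hy].
  { intros n. rewrite <- Hhf. apply Hh', Hxs. }
  exists (k y). intros n. rewrite <- (Hkh (Nat.iter n f (k y))), <- (Hkh (xs n)).
  apply Hk'. rewrite (iter_conj f G h Hhf), Hhk. apply Hy.
Qed.

(** * Images and threads in inverse systems *)

Lemma dependent_choice {C : Type} (P : nat -> C -> Prop) (Rel : nat -> C -> C -> Prop) (c0 : C) :
  P 0%nat c0 -> (forall n c, P n c -> exists c', P (S n) c' /\ Rel n c c') ->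
  exists s : nat -> C, s 0%nat = c0 /\ forall n, P n (s n) /\ Rel n (s n) (s (S n)).
Proof.
  intros H0 Hstep.
  pose (next := fun n (c : {c | P n c}) =>
    constructive_indefinite_description _ (Hstep n _ (proj2_sig c))).
  pose (s := fix s n : {c | P n c} :=
    match n with
    | O => exist _ c0 H0
    | S n => exist _ (proj1_sig (next n (s n))) (proj1 (proj2_sig (next n (s n))))
    end).
  exists (fun n => proj1_sig (s n)). split; [reflexivity|].
  intros n. split; [apply proj2_sig | exact (proj2 (proj2_sig (next n (s n))))].
Qed.

Section InverseSystem.
Context {Xs : nat -> Type} (g : forall m, Xs (S m) -> Xs m).

Definition chain (c : forall m, Xs m) (a b : nat) : Prop :=
  forall m, (a <= m)%nat -> (m < b)%nat -> c m = g m (c (S m)).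

Definition image (N T : nat) (y : Xs N) : Prop := exists c, chain c N T /\ c N = y.

Definition stable (N : nat) (y : Xs N) : Prop := forall T, image N T y.

Definition update (c : forall m, Xs m) (i : nat) (v : Xs i) : forall m, Xs m :=
  fun m => match Nat.eq_dec i m with
           | left e => eq_rect i Xs v m e
           | right _ => c m
           end.

Lemma update_eq (c : forall m, Xs m) (i : nat) (v : Xs i) : update c i v i = v.
Proof.
  unfold update. destruct (Nat.eq_dec i i) as [e|]; [|congruence].
  symmetry. apply eq_rect_eq_dec, Nat.eq_dec.
Qed.

Lemma update_neq (c : forall m, Xs m) (i : nat) (v : Xs i) (m : nat) :
  i <> m -> update c i v m = c m.
Proof. intros H. unfold update. destruct (Nat.eq_dec i m); congruence. Qed.

Lemma chain_sub (c : forall m, Xs m) (a b a' b' : nat) :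
  chain c a b -> (a <= a')%nat -> (b' <= b)%nat -> chain c a' b'.
Proof. intros H Ha Hb m Hm1 Hm2. apply H; lia. Qed.

Lemma chain_update (c : forall m, Xs m) (a b : nat) (v : Xs (S b)) :
  chain c a b -> g b v = c b -> chain (update c (S b) v) a (S b).
Proof.
  intros Hc Hv m Hm1 Hm2. rewrite (update_neq c _ v m) by lia.
  destruct (Nat.eq_dec m b) as [->|Hmb].
  - now rewrite update_eq.
  - rewrite (update_neq c _ v (S m)) by lia. apply Hc; lia.
Qed.

Lemma image_antitone (N T T' : nat) (y : Xs N) : (T' <= T)%nat -> image N T y -> image N T' y.
Proof. intros HT [c [Hc Hy]]. exists c. split; [eapply chain_sub; eauto|exact Hy]. Qed.

Lemma chain_gcomp (N j : nat) (c : forall m, Xs m) :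
  chain c N (j + N) -> c N = gcomp Xs g N j (c (j + N)%nat).
Proof.
  revert c. induction j as [|j IH]; intros c Hc; [reflexivity|].
  simpl. rewrite <- (Hc (j + N)%nat) by lia. apply IH.
  eapply chain_sub; eauto; lia.
Qed.

Lemma invlim_chain (p : inv_limit Xs g) (a b : nat) : chain (proj1_sig p) a b.
Proof. intros m _ _. apply (proj2_sig p). Qed.

Section Default.
Variable d0 : forall m, Xs m.

Lemma chain_down (T : nat) (x : Xs T) : exists c, chain c 0 T /\ c T = x.
Proof.
  induction T as [|T IH].
  - exists (update d0 0 x). split; [intros m _ Hm; lia | apply update_eq].
  - destruct (IH (g T x)) as [c [Hc Hx]]. exists (update c (S T) x).
    split; [apply chain_update; auto | apply update_eq].
Qed.

Lemma gimage_iff_image (N j : nat) (y : Xs N) : gimage Xs g N j y <-> image N (j + N) y.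
Proof.
  split.
  - intros [x ->]. destruct (chain_down (j + N) x) as [c [Hc Hx]].
    exists c. split; [eapply chain_sub; eauto; lia|].
    now rewrite (chain_gcomp N j c), Hx by (eapply chain_sub; eauto; lia).
  - intros [c [Hc <-]]. exists (c (j + N)%nat). now apply chain_gcomp.
Qed.

Definition images_stabilize : Prop :=
  forall N, exists T, (N <= T)%nat /\ forall y, image N T y -> stable N y.

Lemma mittag_leffler_images_stabilize : mittag_leffler Xs g -> images_stabilize.
Proof.
  intros Hml N. destruct (Hml N) as [K [HK H]]. exists (S K). split; [lia|].
  intros y Hy T. apply image_antitone with (S (Nat.max K T)); [lia|].
  replace (S (Nat.max K T)) with (S (Nat.max K T) - N + N)%nat by lia.
  apply gimage_iff_image, (H (Nat.max K T)); [lia|].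
  apply gimage_iff_image. now replace (S K - N + N)%nat with (S K) by lia.
Qed.

Lemma mittag_leffler_of_eventually_constant :
  (forall N, exists T0 (Y : Xs N -> Prop), forall T, (T0 <= T)%nat ->
     forall y, image N T y <-> Y y) ->
  mittag_leffler Xs g.
Proof.
  intros Hc N. destruct (Hc N) as [T0 [Y HY]].
  exists (S (Nat.max N T0)). split; [lia|]. intros i Hi y.
  rewrite !gimage_iff_image, !HY by lia. reflexivity.
Qed.
End Default.

Section StableThreads.
Hypothesis stabilize : images_stabilize.

Lemma stable_lift (N : nat) (y : Xs N) :
  stable N y -> exists y', stable (S N) y' /\ g N y' = y.
Proof.
  intros Hy. destruct (stabilize (S N)) as [T [HT Hst]].
  destruct (Hy T) as [c [Hc <-]]. exists (c (S N)). split.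
  - apply Hst. exists c. split; [eapply chain_sub; eauto|reflexivity].
  - symmetry. apply Hc; lia.
Qed.

Lemma chain_extend_stable (c : forall m, Xs m) (b : nat) :
  chain c 0 b -> stable b (c b) -> exists c', chain c' 0 (S b) /\
    stable (S b) (c' (S b)) /\ forall m, (m <= b)%nat -> c' m = c m.
Proof.
  intros Hc Hst. destruct (stable_lift b (c b) Hst) as [y [Hy Hgy]].
  exists (update c (S b) y). split; [|split].
  - now apply chain_update.
  - now rewrite update_eq.
  - intros m Hm. apply update_neq. lia.
Qed.

Lemma thread_through_stable (N : nat) (c : forall m, Xs m) :
  chain c 0 N -> stable N (c N) ->
  exists p : inv_limit Xs g, forall m, (m <= N)%nat -> proj1_sig p m = c m.
Proof.
  intros Hc Hst.
  destruct (dependent_choice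
    (fun n c => chain c 0 (n + N) /\ stable (n + N) (c (n + N)%nat))
    (fun n c c' => forall m, (m <= n + N)%nat -> c' m = c m) c)
    as [s [Hs0 Hs]]; [now split|..].
  { intros n c' [Hc' Hst']. destruct (chain_extend_stable c' (n + N) Hc' Hst')
      as [c'' [H1 [H2 H3]]]. exists c''. auto. }
  assert (Hmono : forall a b m, (a <= b)%nat -> (m <= a + N)%nat -> s b m = s a m).
  { intros a b m Hab. induction Hab as [|b Hab IH]; intros Hm; [reflexivity|].
    rewrite (proj2 (Hs b)) by lia. now apply IH. }
  assert (Hthread : forall m, s m m = g m (s (S m) (S m))).
  { intros m. rewrite <- (Hmono m (S m) m) by lia. apply (proj1 (Hs (S m))); lia. }
  exists (exist _ (fun m => s m m) Hthread). intros m Hm. simpl.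
  now rewrite (Hmono 0%nat m m), Hs0 by lia.
Qed.
End StableThreads.
End InverseSystem.

(** * Shadowing in inverse limits of 1-step shifts *)

Section ShiftInverseLimit.
Context {A : nat -> Type} {F : forall m, A m -> A m -> Prop}
  (g : forall m, shift_space (A (S m)) (F (S m)) -> shift_space (A m) (F m)).
Hypothesis g_uc : forall m, unif_cont shift_dist shift_dist (g m).
Hypothesis g_shift : forall m y, g m (shift_map y) = shift_map (g m y).

Lemma invlim_shift_thread (p : inv_limit (fun m => shift_space (A m) (F m)) g) (m : nat) :
  shift_map (proj1_sig p m) = g m (shift_map (proj1_sig p (S m))).
Proof. now rewrite g_shift, <- (proj2_sig p m). Qed.

Definition invlim_shift (p : inv_limit (fun m => shift_space (A m) (F m)) g)
  : inv_limit (fun m => shift_space (A m) (F m)) g :=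
  exist _ (fun m => shift_map (proj1_sig p m)) (invlim_shift_thread p).

Lemma invlim_shift_iter (n : nat) (p : inv_limit (fun m => shift_space (A m) (F m)) g) (m : nat) :
  proj1_sig (Nat.iter n invlim_shift p) m = Nat.iter n shift_map (proj1_sig p m).
Proof. induction n as [|n IH]; simpl; [reflexivity|]. now rewrite IH. Qed.

Lemma chain_shift_iter (c : forall m, shift_space (A m) (F m)) (a b n : nat) :
  chain g c a b -> chain g (fun m => Nat.iter n shift_map (c m)) a b.
Proof.
  intros Hc m Hm1 Hm2. simpl. rewrite (Hc m) by assumption.
  induction n as [|n IH]; simpl; [reflexivity|]. now rewrite IH, g_shift.
Qed.

Lemma chain_agree_down (a b L : nat) : exists L', forall c c' : forall m, shift_space (A m) (F m),
  chain g c a b -> chain g c' a b ->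
  agree L' (proj1_sig (c b)) (proj1_sig (c' b)) ->
  forall m, (a <= m)%nat -> (m <= b)%nat -> agree L (proj1_sig (c m)) (proj1_sig (c' m)).
Proof.
  induction b as [|b [L1 HL1]].
  - exists L. intros c c' _ _ H m _ Hm. now replace m with 0%nat by lia.
  - destruct (proj1 (shift_unif_cont_iff (g b)) (g_uc b) L1) as [L2 HL2].
    exists (Nat.max L L2). intros c c' Hc Hc' H m Hm1 Hm2.
    destruct (Nat.eq_dec m (S b)) as [->|Hmb].
    + apply agree_le with (Nat.max L L2); [lia | exact H].
    + apply (HL1 c c'); [apply chain_sub with a (S b); [exact Hc | lia | lia]
                        | apply chain_sub with a (S b); [exact Hc' | lia | lia] | | lia | lia].
      rewrite (Hc b), (Hc' b) by lia. apply HL2, agree_le with (Nat.max L L2); [lia | exact H].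
Qed.

(* A pseudo-orbit read at a deep level T is traced in the 1-step shift at level T;
   by Mittag-Leffler its image at level M is stable, hence lies on a thread. *)
Lemma invlim_shift_shadowing (d0 : forall m, shift_space (A m) (F m)) :
  mittag_leffler (fun m => shift_space (A m) (F m)) g ->
  shadowing (dPi (fun m => @shift_dist (A m) (F m))) invlim_shift.
Proof.
  intros Hml. pose proof (mittag_leffler_images_stabilize g d0 Hml) as Hstab.
  intros eps He.
  destruct (dPi_shift_lt_of_agree (g := g) eps He) as [M [L HML]].
  destruct (chain_agree_down 0 M L) as [LM HLM].
  destruct (Hstab M) as [T [HMT HT]].
  destruct (chain_agree_down M T LM) as [LT HLT].
  destruct (agree_of_dPi_shift_lt (g := g) T LT) as [th [Hth Hag]].
  exists th. split; [exact Hth|]. intros ys Hys.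
  assert (Hw : forall n, agree LT (proj1_sig (shift_map (proj1_sig (ys n) T)))
                                 (proj1_sig (proj1_sig (ys (S n)) T))).
  { intros n. apply (Hag _ _ (Hys n)). }
  destruct (one_step_shift_tracing _ LT Hw) as [z Hz].
  destruct (chain_down g d0 T z) as [c [Hc Hcz]].
  assert (Hsub : forall c', chain g c' 0 T -> forall a b, (b <= T)%nat -> chain g c' a b)
    by (intros c' Hc' a b Hb; apply chain_sub with 0%nat T; [exact Hc' | lia | exact Hb]).
  assert (Hst : stable g M (c M)) by (apply HT; exists c; split; [now apply Hsub | reflexivity]).
  destruct (thread_through_stable g Hstab M c (Hsub c Hc 0%nat M HMT) Hst) as [p Hp].
  exists p. intros n. apply HML. intros m Hm.
  rewrite invlim_shift_iter, Hp by exact Hm.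
  set (cn := fun m => Nat.iter n shift_map (c m)).
  assert (Hcn : chain g cn 0 T) by now apply chain_shift_iter.
  apply (HLM cn (proj1_sig (ys n))); [now apply Hsub | apply invlim_chain | | lia | exact Hm].
  apply (HLT cn (proj1_sig (ys n))); [now apply Hsub | apply invlim_chain | | lia | lia].
  unfold cn. rewrite Hcz. apply Hz.
Qed.
End ShiftInverseLimit.

(** * Symbolic coding by a defining sequence *)

Lemma iter_unif_cont {X : Type} (d : X -> X -> R) (f : X -> X) :
  unif_cont d d f -> forall L eps, 0 < eps -> exists del, 0 < del /\
    forall x y, d x y < del -> forall i, (i <= L)%nat -> d (Nat.iter i f x) (Nat.iter i f y) < eps.
Proof.
  intros Hf L. induction L as [|L IH]; intros eps He.
  - exists eps. split; [exact He|]. intros x y H i Hi. now replace i with 0%nat by lia.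
  - destruct (Hf eps He) as [d1 [Hd1 H1]].
    destruct (IH (Rmin eps d1)) as [d2 [Hd2 H2]]; [now apply Rmin_pos|].
    exists d2. split; [exact Hd2|]. intros x y H i Hi.
    destruct (Nat.eq_dec i (S L)) as [->|Hi'].
    + apply H1. eapply Rlt_le_trans; [apply H2; auto | apply Rmin_r].
    + eapply Rlt_le_trans; [apply H2; auto; lia | apply Rmin_l].
Qed.

Section Coding.
Variables (X : Type) (d : X -> X -> R) (f : X -> X) (U : nat -> (X -> Prop) -> Prop).
Hypothesis d_metric : is_metric d.
Hypothesis f_uc : unif_cont d d f.
Hypothesis U_defining : defining_sequence d U.
Hypothesis U_complete : complete_seq U.
Hypothesis U_tame : tame_seq d U.

Lemma eq_of_dist_small (x y : X) : (forall eps, 0 < eps -> d x y < eps) -> x = y.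
Proof.
  intros H. destruct d_metric as [Hpos [Heq _]]. apply Heq.
  destruct (Rle_lt_or_eq_dec 0 (d x y) (Hpos x y)) as [Hlt|]; [|congruence].
  specialize (H _ Hlt). lra.
Qed.

Lemma mesh_small (eps : R) : 0 < eps -> exists N, forall n, (N <= n)%nat ->
  forall O, U n O -> forall x y, O x -> O y -> d x y < eps.
Proof. apply (proj1 U_tame). Qed.

Definition cell (m : nat) : Type := {O : X -> Prop | U m O}.

Lemma cell_unique (m : nat) (a b : cell m) (x : X) : proj1_sig a x -> proj1_sig b x -> a = b.
Proof.
  intros Ha Hb. destruct (proj1 U_defining m) as [_ [Hdisj _]].
  apply eq_sig_hprop; [intros; apply proof_irrelevance|].
  apply NNPP. intros Hne. exact (Hdisj _ _ (proj2_sig a) (proj2_sig b) Hne x (conj Ha Hb)).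
Qed.

Definition cell_of (m : nat) (x : X) : cell m :=
  let s := constructive_indefinite_description _ (proj2 (proj2 (proj1 U_defining m)) x) in
  exist _ (proj1_sig s) (proj1 (proj2_sig s)).

Lemma cell_of_mem (m : nat) (x : X) : proj1_sig (cell_of m x) x.
Proof.
  unfold cell_of. destruct (constructive_indefinite_description _ _) as [O HO]. exact (proj2 HO).
Qed.

Lemma cell_of_unique (m : nat) (x : X) (a : cell m) : proj1_sig a x -> a = cell_of m x.
Proof. intros Ha. exact (cell_unique m a _ x Ha (cell_of_mem m x)). Qed.

Definition parent (m : nat) (a : cell (S m)) : cell m :=
  let s := constructive_indefinite_description _ (proj1 (proj2 U_defining) m _ (proj2_sig a)) in
  exist _ (proj1_sig s) (proj1 (proj2_sig s)).

Lemma parent_sup (m : nat) (a : cell (S m)) (x : X) : proj1_sig a x -> proj1_sig (parent m a) x.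
Proof.
  unfold parent. destruct (constructive_indefinite_description _ _) as [O HO]. apply (proj2 HO).
Qed.

Lemma parent_cell_of (m : nat) (x : X) : parent m (cell_of (S m) x) = cell_of m x.
Proof. apply cell_of_unique, parent_sup, cell_of_mem. Qed.

Lemma cell_of_eq_down (n m : nat) (x y : X) :
  (m <= n)%nat -> cell_of n x = cell_of n y -> cell_of m x = cell_of m y.
Proof.
  intros Hmn. induction Hmn as [|n Hmn IH]; intros H; [exact H|].
  apply IH. now rewrite <- (parent_cell_of n x), <- (parent_cell_of n y), H.
Qed.

(* [rho] is the separation constant of [U n]. *)
Lemma cell_of_close (n : nat) : exists rho, 0 < rho /\
  forall (a : cell n) q x, proj1_sig a q -> d q x < rho -> a = cell_of n x.
Proof.
  destruct (proj2 U_tame n) as [rho [Hrho Hsep]]. exists rho. split; [exact Hrho|].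
  intros a q x Hq Hqx. apply NNPP. intros Hne.
  assert (Hne' : proj1_sig a <> proj1_sig (cell_of n x)) by (intros E; apply Hne, eq_sig_hprop;
    [intros; apply proof_irrelevance | exact E]).
  pose proof (Hsep _ _ (proj2_sig a) (proj2_sig (cell_of n x)) Hne' q x Hq (cell_of_mem n x)).
  lra.
Qed.

Definition forbidden (m : nat) (a b : cell m) : Prop :=
  ~ exists x, proj1_sig a x /\ proj1_sig b (f x).

Local Notation symbolic m := (shift_space (cell m) (forbidden m)).

Lemma parent_shift_allowed (m : nat) (y : symbolic (S m)) (i : nat) :
  ~ forbidden m (parent m (proj1_sig y i)) (parent m (proj1_sig y (S i))).
Proof.
  intros Hn. apply (proj2_sig y i). intros [x [H1 H2]].
  apply Hn. exists x. split; apply parent_sup; assumption.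
Qed.

Definition parent_shift (m : nat) (y : symbolic (S m)) : symbolic m :=
  exist _ (fun i => parent m (proj1_sig y i)) (parent_shift_allowed m y).

Lemma parent_shift_comm (m : nat) (y : symbolic (S m)) :
  parent_shift m (shift_map y) = shift_map (parent_shift m y).
Proof. now apply shift_ext. Qed.

Lemma parent_shift_unif_cont (m : nat) : unif_cont shift_dist shift_dist (parent_shift m).
Proof.
  apply shift_unif_cont_iff. intros L. exists L.
  intros u v H i Hi. simpl. now rewrite H.
Qed.

Lemma itinerary_allowed (m : nat) (x : X) (i : nat) :
  ~ forbidden m (cell_of m (Nat.iter i f x)) (cell_of m (Nat.iter (S i) f x)).
Proof. intros Hn. apply Hn. exists (Nat.iter i f x). split; apply cell_of_mem. Qed.

Definition itinerary (m : nat) (x : X) : symbolic m :=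
  exist _ (fun i => cell_of m (Nat.iter i f x)) (itinerary_allowed m x).

Lemma itinerary_thread (x : X) (m : nat) : itinerary m x = parent_shift m (itinerary (S m) x).
Proof. apply shift_ext. intros i. simpl. now rewrite parent_cell_of. Qed.

Definition code (x : X) : inv_limit (fun m => symbolic m) parent_shift :=
  exist _ (fun m => itinerary m x) (itinerary_thread x).

Lemma code_shift (x : X) (m : nat) :
  proj1_sig (code (f x)) m = shift_map (proj1_sig (code x) m).
Proof.
  apply shift_ext. intros i. simpl. f_equal.
  induction i as [|i IH]; simpl; [reflexivity|]. now rewrite IH.
Qed.

Lemma limit_point_exists (p : inv_limit (fun m => symbolic m) parent_shift) (i : nat) :
  exists x, forall n, proj1_sig (proj1_sig (proj1_sig p n) i) x.
Proof.
  apply (U_complete (fun n => proj1_sig (proj1_sig (proj1_sig p n) i))).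
  - intros n. apply proj2_sig.
  - intros n x Hx. rewrite (proj2_sig p n). now apply parent_sup.
Qed.

Definition limit_point (p : inv_limit (fun m => symbolic m) parent_shift) (i : nat) : X :=
  proj1_sig (constructive_indefinite_description _ (limit_point_exists p i)).

Lemma limit_point_mem (p : inv_limit (fun m => symbolic m) parent_shift) (i n : nat) :
  proj1_sig (proj1_sig (proj1_sig p n) i) (limit_point p i).
Proof. unfold limit_point. now destruct (constructive_indefinite_description _ _) as [x Hx]. Qed.

(* The word [p_N i, p_N (S i)] is allowed, so [f] maps a point [x] near
   [limit_point p i] to a point near [limit_point p (S i)]. *)
Lemma limit_point_succ (p : inv_limit (fun m => symbolic m) parent_shift) (i : nat) :
  f (limit_point p i) = limit_point p (S i).
Proof.
  apply eq_of_dist_small. intros eps He.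
  destruct (f_uc (eps / 2)) as [del [Hdel Hd]]; [lra|].
  destruct (mesh_small (Rmin del (eps / 2))) as [N HN]; [apply Rmin_pos; lra|].
  set (a := proj1_sig (proj1_sig p N) i). set (b := proj1_sig (proj1_sig p N) (S i)).
  destruct (NNPP _ (proj2_sig (proj1_sig p N) i)) as [x [Hx Hfx]].
  assert (H1 : d (limit_point p i) x < del).
  { eapply Rlt_le_trans; [|apply Rmin_l].
    apply (HN N (le_n _) _ (proj2_sig a)); [apply limit_point_mem | exact Hx]. }
  assert (H2 : d (f x) (limit_point p (S i)) < eps / 2).
  { eapply Rlt_le_trans; [|apply Rmin_r].
    apply (HN N (le_n _) _ (proj2_sig b)); [exact Hfx | apply limit_point_mem]. }
  specialize (Hd _ _ H1). destruct d_metric as [_ [_ [_ Htri]]].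
  pose proof (Htri (f (limit_point p i)) (f x) (limit_point p (S i))). lra.
Qed.

Definition decode (p : inv_limit (fun m => symbolic m) parent_shift) : X := limit_point p 0.

Lemma code_decode (p : inv_limit (fun m => symbolic m) parent_shift) : code (decode p) = p.
Proof.
  apply invlim_ext. intros m. apply shift_ext. intros i. simpl. symmetry.
  replace (Nat.iter i f (decode p)) with (limit_point p i).
  - apply cell_of_unique, limit_point_mem.
  - induction i as [|i IH]; [reflexivity|]. simpl. now rewrite <- IH, limit_point_succ.
Qed.

Lemma decode_code (x : X) : decode (code x) = x.
Proof.
  apply eq_of_dist_small. intros eps He. destruct (mesh_small eps He) as [N HN].
  apply (HN N (le_n _) _ (proj2_sig (cell_of N x)));
    [apply (limit_point_mem (code x) 0) | apply cell_of_mem].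
Qed.

Lemma code_unif_cont : unif_cont d (dPi (fun m => @shift_dist (cell m) (forbidden m))) code.
Proof.
  intros eps He. destruct (dPi_shift_lt_of_agree (g := parent_shift) eps He) as [M [L HML]].
  destruct (cell_of_close M) as [rho [Hrho Hclose]].
  destruct (iter_unif_cont d f f_uc L rho Hrho) as [del [Hdel Hd]].
  exists del. split; [exact Hdel|]. intros x y Hxy. apply HML. intros m Hm i Hi. simpl.
  apply (cell_of_eq_down M); [exact Hm|].
  apply Hclose with (Nat.iter i f x); [apply cell_of_mem | now apply Hd].
Qed.

Lemma decode_unif_cont : unif_cont (dPi (fun m => @shift_dist (cell m) (forbidden m))) d decode.
Proof.
  intros eps He. destruct (mesh_small eps He) as [N HN].
  destruct (agree_of_dPi_shift_lt (g := parent_shift) N 0) as [th [Hth Hag]].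
  exists th. split; [exact Hth|]. intros p q Hpq.
  set (a := proj1_sig (proj1_sig p N) 0%nat).
  apply (HN N (le_n _) _ (proj2_sig a)); [apply limit_point_mem|].
  unfold a. rewrite (Hag p q Hpq 0%nat (le_n _)). apply limit_point_mem.
Qed.

Lemma cell_countable (m : nat) : separable d -> countable (cell m).
Proof.
  intros [D HD].
  assert (Hmeet : forall a : cell m, exists n, proj1_sig a (D n)).
  { intros a. destruct (proj1 (proj1 U_defining m) _ (proj2_sig a)) as [[x Hx] [Hopen _]].
    destruct (Hopen x Hx) as [r [Hr Hball]]. destruct (HD x r Hr) as [n Hn].
    exists n. now apply Hball. }
  exists (fun a => proj1_sig (constructive_indefinite_description _ (Hmeet a))).
  intros a b Hab.
  destruct (constructive_indefinite_description _ (Hmeet a)) as [na Ha].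
  destruct (constructive_indefinite_description _ (Hmeet b)) as [nb Hb].
  simpl in Hab. subst nb. exact (cell_unique m a b (D na) Ha Hb).
Qed.

Lemma symbolic_pseudo_orbit (m : nat) (y : symbolic m) :
  exists q : nat -> X, forall i,
    proj1_sig (proj1_sig y i) (q i) /\ proj1_sig (proj1_sig y (S i)) (f (q i)).
Proof.
  apply (functional_choice
    (fun i q => proj1_sig (proj1_sig y i) q /\ proj1_sig (proj1_sig y (S i)) (f q))).
  intros i. exact (NNPP _ (proj2_sig y i)).
Qed.

Lemma chain_cell_sub (c : forall m, symbolic m) (N T : nat) :
  chain parent_shift c N T -> forall m, (N <= m <= T)%nat ->
  forall i x, proj1_sig (proj1_sig (c T) i) x -> proj1_sig (proj1_sig (c m) i) x.
Proof.
  intros Hc m Hm i x. remember (T - m)%nat as j eqn:Hj. revert m Hm Hj.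
  induction j as [|j IH]; intros m Hm Hj Hx.
  - now replace m with T by lia.
  - rewrite (Hc m) by lia. apply parent_sup, (IH (S m)); [lia | lia | exact Hx].
Qed.

(* Deep symbolic words are pseudo-orbits of small mesh; their shadowing orbits
   realise the image at level N. *)
Lemma image_itinerary (N : nat) : shadowing d f -> exists T0, forall T, (T0 <= T)%nat ->
  forall y, image parent_shift N T y -> exists x, y = itinerary N x.
Proof.
  intros Hshad. destruct (cell_of_close N) as [rho [Hrho Hclose]].
  destruct (Hshad rho Hrho) as [del [Hdel Hsh]].
  destruct (mesh_small del Hdel) as [T0 HT0].
  exists (Nat.max T0 N). intros T HT y [c [Hc <-]].
  destruct (symbolic_pseudo_orbit T (c T)) as [q Hq].
  destruct (Hsh q) as [x Hx].
  { intros n. apply (HT0 T ltac:(lia) _ (proj2_sig (proj1_sig (c T) (S n)))); apply Hq. }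
  exists x. apply shift_ext. intros i. simpl. apply Hclose with (q i).
  - apply (chain_cell_sub c N T Hc); [lia | apply Hq].
  - destruct d_metric as [_ [_ [Hsym _]]]. rewrite Hsym. apply Hx.
Qed.

Lemma code_mittag_leffler (x0 : X) : shadowing d f ->
  mittag_leffler (fun m => symbolic m) parent_shift.
Proof.
  intros Hshad. apply (mittag_leffler_of_eventually_constant parent_shift (proj1_sig (code x0))).
  intros N. destruct (image_itinerary N Hshad) as [T0 HT0].
  exists T0, (fun y => exists x, y = itinerary N x). intros T HT y. split.
  - now apply HT0.
  - intros [x ->]. exists (proj1_sig (code x)). split; [apply invlim_chain | reflexivity].
Qed.
End Coding.

Theorem corollary4p17 (X : Type) (d : X -> X -> R) (f : X -> X)
  (U : nat -> (X -> Prop) -> Prop) :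
  is_metric d -> separable d ->
  unif_cont d d f ->
  defining_sequence d U -> complete_seq U -> tame_seq d U ->
  (shadowing d f <->
   exists (A : nat -> Type) (F : forall m, A m -> A m -> Prop)
          (g : forall m, shift_space (A (S m)) (F (S m)) -> shift_space (A m) (F m)),
     (forall m, countable (A m)) /\
     (forall m, unif_cont shift_dist shift_dist (g m)) /\
     (forall m y, g m (shift_map y) = shift_map (g m y)) /\
     mittag_leffler (fun m => shift_space (A m) (F m)) g /\
     exists (h : X -> inv_limit (fun m => shift_space (A m) (F m)) g)
            (k : inv_limit (fun m => shift_space (A m) (F m)) g -> X),
       (forall x, k (h x) = x) /\ (forall p, h (k p) = p) /\
       unif_cont d (dPi (fun m => @shift_dist (A m) (F m))) h /\
       unif_cont (dPi (fun m => @shift_dist (A m) (F m))) d k /\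
       (forall x m, proj1_sig (h (f x)) m = shift_map (proj1_sig (h x) m))).
Proof.
  intros Hmet Hsep Hf Hdef Hcomp Htame.
  pose proof Hsep as [D _].
  split.
  - intros Hsh.
    exists (cell X U), (forbidden X f U), (parent_shift X d f U Hdef).
    split; [intros m; now apply (cell_countable X d U Hdef)|].
    split; [apply parent_shift_unif_cont|].
    split; [apply parent_shift_comm|].
    split; [exact (code_mittag_leffler X d f U Hmet Hdef Htame (D 0%nat) Hsh)|].
    exists (code X d f U Hdef), (decode X d f U Hdef Hcomp).
    split; [now apply decode_code|].
    split; [now apply code_decode|].
    split; [now apply code_unif_cont|].
    split; [now apply decode_unif_cont|].
    apply code_shift.
  - intros (A & F & g & _ & Hguc & Hgc & Hml & h & k & Hkh & Hhk & Hh & Hk & Hhf).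
    apply (shadowing_conj d _ f (invlim_shift g Hgc) h k Hkh Hhk Hh Hk).
    + intros x. apply invlim_ext, Hhf.
    + exact (invlim_shift_shadowing g Hguc Hgc (proj1_sig (h (D 0%nat))) Hml).
Qed.
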